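(* Let $p$ be a prime and $a,b$ positive integers. In the $(p^a,p^b)$-game there is a winning sequence of exactly $p^{b p^a}-1$ moves.
   Context: The $(n,m)$-game: $n$ counters at positions $1,\dots,n$ (vertices in cyclic order of a regular $n$-gon table), each showing an element of $\mathbb{Z}_m$; a configuration is a vector in $\mathbb{Z}_m^n$, initially arbitrary and unknown. Each turn the player chooses a move $y\in\mathbb{Z}_m^n$ added coordinatewise, then the table is rotated by an adversarially chosen $k\in\mathbb{Z}_n$, replacing $x$ by $x'$ with $x'_{i+k}=x_i$ (indices mod $n$). The player wins if at some moment (including initially) all counters show $0$. A strategy is a finite sequence of moves; it is winning if it forces the zero configuration at some time for every initial configuration and every choice of rotations. *)

From mathcomp Require Import all_boot all_algebra.
Set Implicit Arguments. Unset Strict Implicit. Unset Printing Implicit Defensive.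
Import GRing.Theory.
Local Open Scope ring_scope.

(* Positions are 'Z_n (n >= 2 in all uses), counter values are 'Z_m (m >= 2). *)
Definition config (n m : nat) := 'Z_n -> 'Z_m.

Definition zero_config (n m : nat) : config n m := fun _ => 0.

Definition add_config (n m : nat) (x y : config n m) : config n m :=
  fun i => x i + y i.

Definition rotate (n m : nat) (k : 'Z_n) (x : config n m) : config n m :=
  fun j => x (j - k).

(* reaches_zero x s ks : starting at configuration x, playing the moves s in
   order, with the adversary rotating by ks 0, ks 1, ... after each move,
   the zero configuration occurs at some moment (including initially). *)
Fixpoint reaches_zero (n m : nat) (x : config n m) (s : seq (config n m))
    (ks : nat -> 'Z_n) : Prop :=
  x = @zero_config n m \/
  match s with
  | [::] => False
  | y :: s' => @reaches_zero n m (rotate (ks 0%N) (add_config x y)) s' (fun i => ks i.+1)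
  end.

Definition winning (n m : nat) (s : seq (config n m)) : Prop :=
  forall (x : config n m) (ks : nat -> 'Z_n), reaches_zero x s ks.

From mathcomp Require Import all_boot all_algebra zify.
From Stdlib Require Import FunctionalExtensionality.
Set Implicit Arguments. Unset Strict Implicit. Unset Printing Implicit Defensive.
Import GRing.Theory.
Local Open Scope ring_scope.

(* Configurations are row vectors over Z/p^b indexed by Z/p^a, and the rotation
   by k is right multiplication by S^k, S the cyclic shift matrix. As
   S^(p^a) = 1 and p^b = 0, the binomial theorem makes D := S - 1 nilpotent:
   D^(p^a b) = 0. So the kernels K_j of D^j rise from {0} to the whole space,
   and every rotation moves a point of K_(j+1) only by an element of K_j.
   A winning sequence on K_j of length < |K_j| thus lifts to K_(j+1): play it
   once per coset of K_j, translating from one coset representative to the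
   next in between; the rotations never leave the current coset. The final
   sequence has length < p^(b p^a) and is padded with zero moves. *)

Section Game.

Variables (V : zmodType) (I : Type) (rot : I -> V -> V).

Fixpoint reaches0 (x : V) (s : seq V) (ks : nat -> I) : Prop :=
  x = 0 \/ if s is y :: s' then reaches0 (rot (ks 0%N) (x + y)) s' (fun i => ks i.+1)
           else False.

Fixpoint play (x : V) (s : seq V) (ks : nat -> I) : V :=
  if s is y :: s' then play (rot (ks 0%N) (x + y)) s' (fun i => ks i.+1) else x.

Lemma reaches0_cat x s t ks :
  reaches0 x s ks \/ reaches0 (play x s ks) t (fun i => ks (size s + i)%N) ->
  reaches0 x (s ++ t) ks.
Proof.
elim: s x ks => [|y s IH] x ks /=.
  by case=> [[->|[]]|//]; case: t => [|? ?]; left.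
case=> [[->|H]|H]; first by left.
  by right; apply: IH; left.
by right; apply: IH; right.
Qed.

End Game.

Section Lift.

Variables (V : finZmodType) (I : Type) (rot : I -> V -> V) (W U : {set V}).
Hypotheses (zW : zmod_closed W) (zU : zmod_closed U) (sUW : U \subset W).
Hypothesis rot_subr : forall k, {in W, forall z, rot k z - z \in U}.

Definition winning_on (A : {set V}) (s : seq V) :=
  all (mem A) s /\ {in A, forall x ks, reaches0 rot x s ks}.

Lemma rot_in k : {in W, forall z, rot k z \in W}.
Proof.
move=> z zW'; rewrite -(subrK z (rot k z)).
by apply: (Algebra.zmod_closedD zW) => //; apply: (subsetP sUW); apply: rot_subr.
Qed.

Lemma play_subr x s ks : x \in W -> all (mem U) s -> play rot x s ks - x \in U.
Proof.
elim: s x ks => [|y s IH] x ks /= xW; first by rewrite subrr; case: zU.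
case/andP=> yU sU; set x' := rot _ (x + y).
have xyW : x + y \in W by apply: (Algebra.zmod_closedD zW) => //; apply: (subsetP sUW).
have x'W : x' \in W by apply: rot_in.
have -> : play rot x' s (fun i => ks i.+1) - x =
    (play rot x' s (fun i => ks i.+1) - x') + ((x' - (x + y)) + y).
  by rewrite opprD !addrA subrK addrNK.
apply: (Algebra.zmod_closedD zU); first exact: IH.
by apply: (Algebra.zmod_closedD zU) => //; apply: rot_subr.
Qed.

(* Modulo U the position after the i-th copy of s is x + r0 - r_i. *)
Fixpoint coset_sweep (s : seq V) (r0 : V) (rs : seq V) : seq V :=
  if rs is r1 :: rs' then s ++ (r0 - r1) :: coset_sweep s r1 rs' else s.

Lemma size_coset_sweep s r0 rs :
  (size (coset_sweep s r0 rs)).+1 = ((size rs).+1 * (size s).+1)%N.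
Proof.
elim: rs r0 => [|r1 rs IH] r0 /=; first by rewrite mul1n.
by rewrite size_cat /= -addnS IH; lia.
Qed.

Lemma coset_sweep_in s r0 rs : all (mem U) s -> r0 \in W -> all (mem W) rs ->
  all (mem W) (coset_sweep s r0 rs).
Proof.
move=> sU; have sW : all (mem W) s by apply: sub_all sU => u /(subsetP sUW).
elim: rs r0 => [|r1 rs IH] r0 //= r0W /andP[r1W rsW].
by rewrite all_cat sW /= IH // andbT; apply: zW.2.
Qed.

Lemma reaches0_coset_sweep s : winning_on U s ->
  forall rs r0 x ks, x \in W -> r0 \in W -> all (mem W) rs ->
  (exists2 r, r \in r0 :: rs & x + r0 - r \in U) ->
  reaches0 rot x (coset_sweep s r0 rs) ks.
Proof.
move=> [sU sWin]; elim=> [|r1 rs IH] r0 x ks xW r0W rsW [r].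
  by rewrite inE => /eqP-> /=; rewrite addrK => /sWin.
rewrite inE => /orP[/eqP-> | rrs] xr /=; apply: reaches0_cat.
  by left; move: xr; rewrite addrK => /sWin.
right; right; set y := play rot x s ks; set k := ks _.
case/andP: rsW => r1W rsW.
have yx : y - x \in U by apply: play_subr.
have yW : y + (r0 - r1) \in W.
  rewrite -(subrK x y) -addrA.
  apply: (Algebra.zmod_closedD zW); first exact: (subsetP sUW).
  by apply: (Algebra.zmod_closedD zW) => //; apply: zW.2.
apply: IH => //; first exact: rot_in.
exists r => //.
have -> : rot k (y + (r0 - r1)) + r1 - r =
    (rot k (y + (r0 - r1)) - (y + (r0 - r1))) + ((y - x) + (x + r0 - r)).
  rewrite opprD opprB !addrA; congr (_ - r).
  by rewrite (subrK x) (addrAC _ (- r0)) (subrK r0) (addrAC _ r1) (subrK y).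
apply: (Algebra.zmod_closedD zU); first exact: rot_subr.
exact: (Algebra.zmod_closedD zU).
Qed.

Lemma subr_in_congr x y : x - y \in U -> forall z, (x - z \in U) = (y - z \in U).
Proof.
move=> xy z; apply/idP/idP => hz.
  by have := zU.2 _ _ hz xy; rewrite opprB addrC addrA subrK.
by rewrite -(subrKA y); apply: (Algebra.zmod_closedD zU).
Qed.

Definition coset_rep (x : V) : V := odflt x [pick y | x - y \in U].

Lemma coset_rep_subr x : x - coset_rep x \in U.
Proof.
rewrite /coset_rep; case: pickP => [y //|/(_ x)].
by rewrite subrr; case: zU => ->.
Qed.

Lemma coset_rep_in x : x \in W -> coset_rep x \in W.
Proof.
move=> xW; rewrite -(subKr x (coset_rep x)); apply: zW.2 => //.
exact/(subsetP sUW)/coset_rep_subr.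
Qed.

Lemma eq_coset_rep x y : x - y \in U -> coset_rep x = coset_rep y.
Proof.
move=> xy; rewrite /coset_rep (eq_pick (subr_in_congr xy)).
by case: pickP => // /(_ y); rewrite subrr; case: zU => ->.
Qed.

Lemma coset_rep_id x : coset_rep (coset_rep x) = coset_rep x.
Proof. exact/esym/eq_coset_rep/coset_rep_subr. Qed.

Lemma card_coset_reps : (#|coset_rep @: W| * #|U| <= #|W|)%N.
Proof.
rewrite -cardsX -(card_in_imset (f := fun ru : V * V => ru.1 + ru.2)).
  apply/subset_leq_card/subsetP => _ /imsetP[[_ u] /setXP[/imsetP[x xW ->] uU] ->].
  by apply: (Algebra.zmod_closedD zW); [exact: coset_rep_in | exact: (subsetP sUW)].
move=> [_ u] [_ u'] /setXP[/imsetP[x _ ->] uU] /setXP[/imsetP[x' _ ->] u'U] /= E.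
have Er : coset_rep x = coset_rep x'.
  rewrite -coset_rep_id -[RHS]coset_rep_id; apply: eq_coset_rep.
  rewrite -[coset_rep x](addrK u) E -!addrA (addrC (coset_rep x')) !addrA subrK.
  exact: zU.2.
by move: E; rewrite Er => /addrI ->.
Qed.

Lemma winning_on_lift s : winning_on U s -> (size s < #|U|)%N ->
  exists2 s', winning_on W s' & (size s' < #|W|)%N.
Proof.
move=> sWin ltsU; set R := coset_rep @: W.
case ER: (enum R) => [|r0 rs].
  by have := imset_f coset_rep zW.1; rewrite -mem_enum ER.
have inR r : (r \in r0 :: rs) = (r \in R) by rewrite -ER mem_enum.
have RW r : r \in r0 :: rs -> r \in W by rewrite inR => /imsetP[x xW ->]; apply: coset_rep_in.
have r0W : r0 \in W by apply/RW/mem_head.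
have rsW : all (mem W) rs by apply/allP => r rrs; apply/RW; rewrite inE rrs orbT.
exists (coset_sweep s r0 rs); first split.
- by apply: coset_sweep_in => //; case: sWin.
- move=> x xW ks; apply: reaches0_coset_sweep => //.
  exists (coset_rep (x + r0)); last exact: coset_rep_subr.
  by rewrite inR imset_f // (Algebra.zmod_closedD zW).
- apply: leq_trans card_coset_reps.
  by rewrite size_coset_sweep -/R cardE ER leq_mul2l ltsU orbT.
Qed.

End Lift.

Lemma prime_power_dvd_bin p a i : prime p -> (0 < i < p ^ a)%N -> (p %| 'C(p ^ a, i))%N.
Proof.
move=> pP; case: i => // i /andP[_ lt_ipa]; apply: contraLR lt_ipa => p'C.
have: (p ^ a %| i.+1 * 'C(p ^ a, i.+1))%N by rewrite -mul_bin_diag dvdn_mulr.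
by rewrite Gauss_dvdl ?coprimeXl ?prime_coprime // -leqNgt => /dvdn_leq->.
Qed.

Lemma addr1X_prime_power (R : pzRingType) (x : R) p a : prime p ->
  exists E : R, (x + 1) ^+ (p ^ a) = x ^+ (p ^ a) + 1 + p%:R * E.
Proof.
move=> pP; have pa_gt0 : (0 < p ^ a)%N by rewrite expn_gt0 prime_gt0.
case En: (p ^ a)%N pa_gt0 => [//|n] _.
exists (\sum_(i < n) x ^+ i.+1 *+ ('C(n.+1, i.+1) %/ p)).
rewrite exprD1n big_ord_recr big_ord_recl /= binn bin0 expr0 mulr1n mulr1n.
rewrite [_ + x ^+ _]addrC addrA mulr_sumr; congr (_ + _).
apply: eq_bigr => i _.
rewrite mulr_natl -mulrnA divnK // -En prime_power_dvd_bin // En.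
by rewrite /= ltnS ltn_ord.
Qed.

Lemma subr1X_prime_power_eq0 (R : pzRingType) (x : R) p a b : prime p ->
  x ^+ (p ^ a) = 1 -> (p ^ b)%:R = 0 :> R -> (x - 1) ^+ (p ^ a * b) = 0.
Proof.
move=> pP xpa pb0; have [E] := addr1X_prime_power (x - 1) a pP.
rewrite subrK xpa (addrAC _ 1) -[X in X = _]add0r => /addIr/esym/eqP.
rewrite addr_eq0 => /eqP Dpa.
rewrite exprM Dpa exprNn exprMn_comm; last exact/commr_sym/commr_nat.
by rewrite -natrX pb0 mul0r mulr0.
Qed.

Section CyclicShift.

Variables (n m : nat).
Local Notation N := (Zp_trunc n).+2.

Definition cyclic_shift : 'M['Z_m]_N := \matrix_(i, j) (i + 1 == j)%:R.

Lemma mul_row_cyclic_shift (f : 'Z_n -> 'Z_m) :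
  (\row_j f j) *m cyclic_shift = \row_j f (j - 1).
Proof.
apply/rowP => j; rewrite !mxE (bigD1 (j - 1)) //= !mxE subrK eqxx mulr1.
rewrite big1 ?addr0 // => i ij; rewrite !mxE.
suff /negbTE-> : i + 1 != j by rewrite mulr0.
by apply: contra ij => /eqP <-; rewrite addrK.
Qed.

Lemma mul_row_cyclic_shiftX (f : 'Z_n -> 'Z_m) k :
  (\row_j f j) *m cyclic_shift ^+ k = \row_j f (j - k%:R).
Proof.
elim: k => [|k IH]; first by rewrite mulmx1; apply/rowP => j; rewrite !mxE subr0.
rewrite exprSr mulmxA IH mul_row_cyclic_shift.
by apply/rowP => j; rewrite !mxE -addrA -opprD nat1r.
Qed.

Lemma cyclic_shift_order : (1 < n)%N -> cyclic_shift ^+ n = 1.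
Proof.
move=> n_gt1; apply/row_matrixP => i; rewrite -[X in row _ X]mul1mx row_mul.
have -> : row i 1 = \row_j (1%:M : 'M['Z_m]_N) i j by apply/rowP => j; rewrite !mxE.
by rewrite mul_row_cyclic_shiftX pchar_Zp //; apply/rowP => j; rewrite !mxE subr0.
Qed.

Lemma natr_mx_Zp : (1 < m)%N -> (m%:R : 'M['Z_m]_N) = 0.
Proof. by move=> m_gt1; rewrite -scaler_nat pchar_Zp // scale0r. Qed.

Definition shift_kernel j : {set 'rV['Z_m]_N} :=
  [set u | u *m (cyclic_shift - 1) ^+ j == 0].

Lemma shift_kernel_zmod_closed j : zmod_closed (shift_kernel j).
Proof.
split; first by rewrite inE mul0mx.
by move=> u v; rewrite !inE mulmxBl => /eqP-> /eqP->; rewrite subrr.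
Qed.

Lemma shift_kernelS j : shift_kernel j \subset shift_kernel j.+1.
Proof.
by apply/subsetP => u; rewrite !inE exprSr mulmxA => /eqP->; rewrite mul0mx.
Qed.

Lemma shift_kernel0 : shift_kernel 0 = [set 0].
Proof. by apply/setP => u; rewrite !inE mulmx1. Qed.

Lemma cyclic_shiftX_subr_in j k u :
  u \in shift_kernel j.+1 -> u *m cyclic_shift ^+ k - u \in shift_kernel j.
Proof.
rewrite !inE => /eqP Du; set D := cyclic_shift - 1.
pose S := \sum_(i < k) cyclic_shift ^+ i.
have DjS : GRing.comm (D ^+ j) S.
  apply: commr_sum => i _; apply/commrX/commr_sym/commrX.
  exact/commrB/commr1/commr_refl.
rewrite -{2}[u]mulmx1 -mulmxBr -mulmxA mulmxE subrX1 -/D -mulrA -DjS mulrA -exprS.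
by rewrite -mulmxE mulmxA Du mul0mx.
Qed.

Lemma shift_kernel_winning j : exists2 s,
  winning_on (fun (k : 'Z_n) u => u *m cyclic_shift ^+ k) (shift_kernel j) s &
  (size s < #|shift_kernel j|)%N.
Proof.
elim: j => [|j [s sWin lts]].
  exists [::]; rewrite shift_kernel0 ?cards1 //.
  by split=> // x; rewrite inE => /eqP-> ks; left.
apply: winning_on_lift sWin lts.
- exact: shift_kernel_zmod_closed.
- exact: shift_kernel_zmod_closed.
- exact: shift_kernelS.
- by move=> k z; apply: cyclic_shiftX_subr_in.
Qed.

End CyclicShift.

Definition config_of_row n m (u : 'rV['Z_m]_(Zp_trunc n).+2) : config n m :=
  fun j => u 0 j.

Lemma config_of_row0 n m : config_of_row 0 = @zero_config n m.
Proof. by apply: functional_extensionality => j; rewrite /config_of_row mxE. Qed.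

Lemma config_of_rowK n m (x : config n m) : config_of_row (\row_j x j) = x.
Proof. by apply: functional_extensionality => j; rewrite /config_of_row mxE. Qed.

Lemma row_rotate n m (k : 'Z_n) (x : config n m) u :
  \row_j rotate k (add_config x (config_of_row u)) j =
  (\row_j x j + u) *m cyclic_shift n m ^+ k.
Proof.
have -> : \row_j x j + u = \row_j add_config x (config_of_row u) j.
  by apply/rowP => j; rewrite !mxE.
by rewrite mul_row_cyclic_shiftX natr_Zp.
Qed.

Lemma reaches_zero_of_rows n m (x : config n m) s ks :
  reaches0 (fun (k : 'Z_n) u => u *m cyclic_shift n m ^+ k) (\row_j x j) s ks ->
  reaches_zero x (map (@config_of_row n m) s) ks.
Proof.
elim: s x ks => [|u s IH] x ks /= [x0|reach].
- by left; rewrite -[x]config_of_rowK x0 config_of_row0.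
- by [].
- by left; rewrite -[x]config_of_rowK x0 config_of_row0.
by right; apply: IH; rewrite row_rotate.
Qed.

Theorem mainTheorem8 (p a b : nat) (hp : prime p) (ha : (0 < a)%N) (hb : (0 < b)%N) :
  exists s : seq (config (p ^ a) (p ^ b)),
    size s = (p ^ (b * p ^ a) - 1)%N /\ winning s.
Proof.
have p_gt1 := prime_gt1 hp.
have pa_gt1 : (1 < p ^ a)%N by rewrite -(expn0 p) ltn_exp2l.
have pb_gt1 : (1 < p ^ b)%N by rewrite -(expn0 p) ltn_exp2l.
have kernel_full : shift_kernel (p ^ a) (p ^ b) (p ^ a * b) = setT.
  apply/setP => u.
  by rewrite !inE subr1X_prime_power_eq0 ?mulmx0 ?eqxx ?natr_mx_Zp ?cyclic_shift_order.
have card_rows : #|[set: 'rV['Z_(p ^ b)]_(Zp_trunc (p ^ a)).+2]| = (p ^ (b * p ^ a))%N.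
  by rewrite cardsT card_mx card_ord !Zp_cast // mul1n -expnM mulnC.
have [s [_ sWin]] := shift_kernel_winning (p ^ a) (p ^ b) (p ^ a * b).
rewrite kernel_full card_rows => lts.
exists (map (@config_of_row _ _) (s ++ nseq (p ^ (b * p ^ a) - 1 - size s) 0)).
split.
  by rewrite size_map size_cat size_nseq subnKC //; move: (size s) lts; lia.
move=> x ks; apply/reaches_zero_of_rows/reaches0_cat; left.
by apply: sWin; rewrite kernel_full inE.
Qed.
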